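(* Let $F:\mathbb{R}\to[0,1]$ be a distribution function, let $0<\lambda\le1$ and $\alpha\in(0,1)$, and put $\xi=F^{\wedge}(\alpha)$, $\eta=F^{\vee}(\alpha)$ and $A^{+}_{\lambda,\alpha}=\{x\in\mathbb{R}:x>\xi,\ F_\lambda(x)\le\alpha\}$. (i) If $\xi<\eta$, then $F(\xi)=\alpha=F(\eta-)$, $\alpha\notin\bigcup_{x\in J_F}\big(F(x-),F(x)\big)$, the set $\{x\in\mathbb{R}:x>\xi,\ F(x)=\alpha\}$ is non-empty, the restriction $F|_{A^{+}_{\lambda,\alpha}}$ is continuous, and \[A^{+}_{\lambda,\alpha}=\{x\in\mathbb{R}:x>\xi,\ F(x)=\alpha\}=\begin{cases}(\xi,\eta)&\text{if }F(\eta)>\alpha,\\(\xi,\eta]&\text{if }F(\eta)=\alpha.\end{cases}\] (ii) If $\xi=\eta$, then $A^{+}_{\lambda,\alpha}=\emptyset$. (iii) $J_F=\{x\in\mathbb{R}:F^{\wedge}(u)=x=F^{\vee}(u)\text{ and }\Delta F(F^{\wedge}(u))>0\text{ for some }u\in(0,1)\}=\{x\in\mathbb{R}:F^{\wedge}(u)=x=F^{\vee}(u)\text{ and }\Delta F(F^{\vee}(u))>0\text{ for some }u\in(0,1)\}$. Moreover, the following are equivalent: (a) $0<\Delta F^{\wedge}(\alpha)=\eta-\xi$; (b) $\{x\in\mathbb{R}:x>\xi,\ F(x)=\alpha\}\neq\emptyset$.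
   Context: A distribution function is a non-decreasing, right-continuous $F:\mathbb{R}\to[0,1]$ with limits $0$ at $-\infty$ and $1$ at $+\infty$. $F(x-)=\lim_{z\uparrow x}F(z)$, $\Delta F(x)=F(x)-F(x-)$, $J_F=\{x:\Delta F(x)>0\}$, $F_\lambda(x)=F(x-)+\lambda\Delta F(x)$. For $\alpha\in(0,1)$: $F^{\wedge}(\alpha)=\inf\{x:F(x)\ge\alpha\}$ (left quantile, a left-continuous non-decreasing function on $(0,1)$) and $F^{\vee}(\alpha)=\inf\{x:F(x)>\alpha\}=\sup\{x:F(x)\le\alpha\}=F^{\wedge}(\alpha+)$ (right quantile). The jump of $F^{\wedge}$ at $\alpha$ is $\Delta F^{\wedge}(\alpha)=F^{\wedge}(\alpha+)-F^{\wedge}(\alpha)=F^{\vee}(\alpha)-F^{\wedge}(\alpha)$. *)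

From HB Require Import structures.
From mathcomp Require Import all_boot all_order all_algebra.
From mathcomp Require Import all_classical all_reals all_analysis.
Set Implicit Arguments. Unset Strict Implicit. Unset Printing Implicit Defensive.
Import Order.TTheory GRing.Theory Num.Theory.
Import numFieldNormedType.Exports.
Local Open Scope classical_set_scope.
Local Open Scope ring_scope.

Definition distribution_function (R : realType) (F : R -> R) : Prop :=
  [/\ (forall x y : R, x <= y -> F x <= F y),
      (forall x : R, 0 <= F x <= 1),
      (forall x : R, F z @[z --> x^'+] --> F x),
      F x @[x --> -oo] --> (0:R) &
      F x @[x --> +oo] --> (1:R)].

Definition Fm (R : realType) (F : R -> R) (x : R) : R := lim (F z @[z --> x^'-]).

Definition jumpF (R : realType) (F : R -> R) (x : R) : R := F x - Fm F x.

Definition JF (R : realType) (F : R -> R) : set R := [set x | 0 < jumpF F x].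

Definition Flam (R : realType) (F : R -> R) (lam x : R) : R :=
  Fm F x + lam * jumpF F x.

Definition qleft (R : realType) (F : R -> R) (a : R) : R := inf [set x | a <= F x].

Definition qright (R : realType) (F : R -> R) (a : R) : R := inf [set x | a < F x].

Definition qjump (R : realType) (F : R -> R) (a : R) : R :=
  lim (qleft F u @[u --> a^'+]) - qleft F a.

Definition Aplus (R : realType) (F : R -> R) (lam a : R) : set R :=
  [set x | qleft F a < x /\ Flam F lam x <= a].

(* Both quantiles are pinned down by monotonicity and right
   continuity: F < alpha left of xi, alpha <= F xi, F <= alpha left of eta and
   alpha < F right of eta.  Hence F = alpha on [xi, eta[, and a point x > xi has
   alpha <= F(x-) <= F_lambda(x) <= F(x), so x lies in A+ exactly when F x = alpha,
   which confines it to ]xi, eta].  A jump of F straddling a level u forces both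
   quantiles of u onto the jump point, which gives (iii) and rules out such a
   jump at alpha when xi < eta.  Finally F^wedge(alpha+) = eta, so the jump of the
   left quantile at alpha is eta - xi. *)
From HB Require Import structures.
From mathcomp Require Import all_boot all_order all_algebra.
From mathcomp Require Import all_classical all_reals all_analysis.
From mathcomp Require Import lra.
Import Order.TTheory GRing.Theory Num.Theory.
Import numFieldNormedType.Exports.
Local Open Scope classical_set_scope.
Local Open Scope ring_scope.

Section DistributionFunction.
Context {R : realType} {F : R -> R}.
Hypothesis dF : distribution_function F.

Lemma df_nondecreasing : {homo F : x y / x <= y}.
Proof. by case: dF. Qed.

Lemma df_bounds x : 0 <= F x <= 1.
Proof. by case: dF. Qed.

Lemma cvg_at_left_F x : cvg (F z @[z --> x^'-]).
Proof.
apply: nondecreasing_at_left_is_cvgr.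
  by near=> y => a b _ _; exact: df_nondecreasing.
near=> y; exists (F x) => _ [s sI <-]; apply: df_nondecreasing.
by move: sI; rewrite /= in_itv /= => /andP[_ /ltW].
Unshelve. all: by end_near. Qed.

Lemma le_Fm {y x} : y < x -> F y <= Fm F x.
Proof.
move=> yx; apply: limr_ge; first exact: cvg_at_left_F.
near=> z; apply: df_nondecreasing; near: z; exact: nbhs_left_ge.
Unshelve. all: by end_near. Qed.

Lemma Fm_le_ub x c : (forall y, y < x -> F y <= c) -> Fm F x <= c.
Proof.
move=> Fc; apply: limr_le; first exact: cvg_at_left_F.
near=> z; apply: Fc; near: z; exact: nbhs_left_lt.
Unshelve. all: by end_near. Qed.

Lemma Fm_le x : Fm F x <= F x.
Proof. by apply: Fm_le_ub => y /ltW; exact: df_nondecreasing. Qed.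

Lemma Fm_ge0 x : 0 <= Fm F x.
Proof.
have /le_Fm : x - 1 < x by lra.
by case/andP: (df_bounds (x - 1)) => F0 _; exact: le_trans.
Qed.

Lemma F_ge_lb x c : (forall y, x < y -> c <= F y) -> c <= F x.
Proof.
case: dF => _ _ Fright _ _ cF.
rewrite -(cvg_lim _ (Fright x)) //; apply: limr_ge.
  by apply/cvg_ex; exists (F x); exact: Fright.
near=> z; apply: cF; near: z; exact: nbhs_right_gt.
Unshelve. all: by end_near. Qed.

Lemma exists_F_gt a : a < 1 -> exists x, a < F x.
Proof.
case: dF => _ _ _ _ F1 a1.
have /cvgrPdist_lt/(_ (1 - a)) : F x @[x --> +oo] --> (1:R) by [].
rewrite subr_gt0 => /(_ a1) [M [_ FM]].
exists (M + 1); have := FM (M + 1); rewrite ltrDl ltr01 => /(_ isT).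
by have := ler_norm (1 - F (M + 1)); lra.
Qed.

Lemma exists_F_lt a : 0 < a -> exists x, F x < a.
Proof.
case: dF => _ _ _ F0 _ a0.
have /cvgrPdist_lt/(_ a a0) [M [_ FM]] : F x @[x --> -oo] --> (0:R) by [].
exists (M - 1); have := FM (M - 1); rewrite ltrBlDr ltrDl ltr01 => /(_ isT).
by rewrite sub0r normrN; have := ler_norm (F (M - 1)); lra.
Qed.

Lemma has_lbound_F_ge {a} : 0 < a -> has_lbound [set x | a <= F x].
Proof.
move=> /exists_F_lt[x Fx]; exists x => y /= aFy.
by rewrite leNgt; apply/negP => /ltW /df_nondecreasing; lra.
Qed.

Lemma qleft_le {a y} : 0 < a -> a <= F y -> qleft F a <= y.
Proof. by move=> a0 aFy; apply: ge_inf => //; exact: has_lbound_F_ge. Qed.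

Lemma qright_le {a y} : 0 < a -> a < F y -> qright F a <= y.
Proof.
move=> a0 aFy; apply: ge_inf => //.
by have [m m_lb] := has_lbound_F_ge a0; exists m => z /ltW; exact: m_lb.
Qed.

Lemma F_qleft_ge {a} : 0 < a < 1 -> a <= F (qleft F a).
Proof.
case/andP=> a0 /exists_F_gt[x /ltW aFx].
apply: F_ge_lb => y /(inf_lt (ex_intro _ x aFx)) [z /= aFz zy].
by apply: (le_trans aFz); apply: df_nondecreasing; exact: ltW.
Qed.

Lemma F_lt_qright {a x} : 0 < a -> x < qright F a -> F x <= a.
Proof. by move=> a0 xq; rewrite leNgt; apply/negP => /(qright_le a0); lra. Qed.

Lemma qright_lt_F {a x} : a < 1 -> qright F a < x -> a < F x.
Proof.
move=> /exists_F_gt[y aFy] /(inf_lt (ex_intro _ y aFy)) [z /= aFz zx].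
by apply: (lt_le_trans aFz); apply: df_nondecreasing; exact: ltW.
Qed.

Lemma le_qright {a x} : a < 1 -> F x <= a -> x <= qright F a.
Proof. by move=> a1 Fx; rewrite leNgt; apply/negP => /(qright_lt_F a1); lra. Qed.

Lemma qleft_lt_Fm {a x} : 0 < a < 1 -> qleft F a < x -> a <= Fm F x.
Proof.
move=> a01 qx; pose m := (qleft F a + x) / 2.
apply: (le_trans (F_qleft_ge a01)); apply: (@le_trans _ _ (F m)).
  by apply: df_nondecreasing; rewrite /m; lra.
by apply: le_Fm; rewrite /m; lra.
Qed.

(* F^wedge(u) lies in [F^vee(a), F^vee(a) + e] as soon as a < u <= F(F^vee(a) + e). *)
Lemma qleft_cvg_qright {a} : 0 < a < 1 -> qleft F u @[u --> a^'+] --> qright F a.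
Proof.
move=> /andP[a0 a1]; apply/cvgrPdist_le => e e0.
have aFe : a < F (qright F a + e) by apply: qright_lt_F => //; lra.
near=> u.
have au : a < u by near: u; exact: nbhs_right_gt.
have u1 : u < 1 by near: u; exact: nbhs_right_lt.
have uFe : u <= F (qright F a + e) by near: u; exact: nbhs_right_le.
have u01 : 0 < u < 1 by apply/andP; split; lra.
have qle : qleft F u <= qright F a + e by apply: qleft_le => //; lra.
have qge : qright F a <= qleft F u.
  by apply: qright_le => //; apply: (lt_le_trans au); exact: F_qleft_ge.
rewrite distrC ger0_norm; lra.
Unshelve. all: by end_near. Qed.

Lemma qjumpE {a} : 0 < a < 1 -> qjump F a = qright F a - qleft F a.
Proof. by move=> a01; rewrite /qjump (cvg_lim _ (qleft_cvg_qright a01)). Qed.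

Lemma quantiles_at_jump {u x} : Fm F x < u < F x -> qleft F u = x /\ qright F u = x.
Proof.
case/andP=> Fmu uF; have u0 : 0 < u by have := Fm_ge0 x; lra.
have u1 : u < 1 by case/andP: (df_bounds x); lra.
have u01 : 0 < u < 1 by apply/andP.
split; apply/eqP; rewrite eq_le; apply/andP; split.
- exact: qleft_le (ltW uF).
- rewrite leNgt; apply/negP => /le_Fm; have := F_qleft_ge u01; lra.
- exact: qright_le.
- rewrite leNgt; apply/negP => qx.
  have := qright_lt_F (x := (qright F u + x) / 2) u1.
  have := le_Fm (y := (qright F u + x) / 2) (x := x); lra.
Qed.

Lemma jump_quantiles {x} :
  0 < jumpF F x -> exists2 u, 0 < u < 1 & qleft F u = x /\ qright F u = x.
Proof.
rewrite /jumpF => jump; pose u := (Fm F x + F x) / 2.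
exists u; last by apply: quantiles_at_jump; apply/andP; split; rewrite /u; lra.
have Fm0 := Fm_ge0 x; case/andP: (df_bounds x) => _ F1.
by apply/andP; split; rewrite /u; lra.
Qed.

Section QuantileGap.
Context {a : R}.
Hypothesis a01 : 0 < a < 1.

Local Notation xi := (qleft F a).
Local Notation eta := (qright F a).
Local Notation level := [set x | xi < x /\ F x = a].

Lemma F_eq_on_gap x : xi <= x < eta -> F x = a.
Proof.
case/andP: (a01) => a0 _ /andP[xix xeta].
have := F_qleft_ge a01; have := df_nondecreasing _ _ xix; have := F_lt_qright a0 xeta.
lra.
Qed.

Lemma Fm_qright_gap : xi < eta -> Fm F eta = a.
Proof.
case/andP: (a01) => a0 _ xieta; apply/eqP; rewrite eq_le; apply/andP; split.
  by apply: Fm_le_ub => y; exact: F_lt_qright.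
have := @le_Fm ((xi + eta) / 2) eta; rewrite F_eq_on_gap; first by apply; lra.
by apply/andP; split; lra.
Qed.

Lemma no_jump_across_gap : xi < eta -> ~ exists2 x, x \in JF F & Fm F x < a < F x.
Proof.
by move=> xieta [x _ /quantiles_at_jump[qlx qrx]]; move: xieta; rewrite qlx qrx ltxx.
Qed.

Lemma level_sub_itv : level `<=` `]xi, eta].
Proof.
move=> x [xix Fx]; rewrite /= in_itv /= xix /=.
by case/andP: a01 => _ a1; apply: le_qright => //; rewrite Fx.
Qed.

Lemma level_neq0 : level !=set0 <-> xi < eta.
Proof.
split=> [[x /[dup] /level_sub_itv]|xieta].
  by rewrite /= in_itv /= => /andP[xix xeta] _; exact: lt_le_trans xeta.
exists ((xi + eta) / 2); split; first lra.
by apply: F_eq_on_gap; apply/andP; split; lra.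
Qed.

Lemma level_itv_oo : a < F eta -> level = `]xi, eta[%classic.
Proof.
move=> aFeta; apply/seteqP; split=> x.
  move=> /[dup] [[_ Fx]] /level_sub_itv; rewrite /= !in_itv /= => /andP[-> xeta].
  by rewrite lt_neqAle xeta andbT; apply: contraTneq aFeta => <-; rewrite Fx ltxx.
rewrite /= in_itv /= => /andP[xix xeta]; split=> //.
by apply: F_eq_on_gap; rewrite (ltW xix) xeta.
Qed.

Lemma level_itv_oc : F eta = a -> level = `]xi, eta]%classic.
Proof.
move=> Feta; apply/seteqP; split=> [x|x]; first exact: level_sub_itv.
rewrite /= in_itv /= => /andP[xix]; rewrite le_eqVlt => /predU1P[xe|xeta].
  by rewrite xe in xix *.
by split=> //; apply: F_eq_on_gap; rewrite (ltW xix) xeta.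
Qed.

Lemma continuous_within_level : {within level, continuous F}.
Proof.
apply: (@subspace_eq_continuous _ _ _ (fun=> a)); last exact: cst_continuous.
by move=> x; rewrite inE => -[_].
Qed.

Lemma Aplus_level {lam} : 0 < lam -> Aplus F lam a = level.
Proof.
move=> lam0; apply/seteqP; split=> x [xix]; rewrite /Flam /jumpF => Fx; split=> //;
  have aFm := qleft_lt_Fm a01 xix; have FmF := Fm_le x.
- have : lam * (F x - Fm F x) <= 0 by rewrite -(lerD2l (Fm F x)) addr0 (le_trans Fx aFm).
  rewrite pmulr_rle0 // => FFm; have FmE : Fm F x = F x by lra.
  by rewrite FmE subrr mulr0 addr0 in Fx; lra.
- have FmE : Fm F x = F x by lra.
  by rewrite /Flam /jumpF FmE subrr mulr0 addr0 Fx.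
Qed.

End QuantileGap.

End DistributionFunction.

Theorem mainTheorem3 (R : realType) (F : R -> R) (lam alpha : R) :
  distribution_function F -> 0 < lam <= 1 -> 0 < alpha < 1 ->
  let xi := qleft F alpha in
  let eta := qright F alpha in
  let A := Aplus F lam alpha in
  (* (i) *)
  (xi < eta ->
     F xi = alpha /\ alpha = Fm F eta /\
     ~ (exists2 x, x \in JF F & Fm F x < alpha < F x) /\
     [set x | xi < x /\ F x = alpha] !=set0 /\
     {within A, continuous F} /\
     A = [set x | xi < x /\ F x = alpha] /\
     (alpha < F eta -> A = `]xi, eta[%classic) /\
     (F eta = alpha -> A = `]xi, eta]%classic)) /\
  (* (ii) *)
  (xi = eta -> A = set0) /\
  (* (iii) *)
  (JF F = [set x | exists2 u, 0 < u < 1 &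
             qleft F u = x /\ x = qright F u /\ 0 < jumpF F (qleft F u)] /\
   JF F = [set x | exists2 u, 0 < u < 1 &
             qleft F u = x /\ x = qright F u /\ 0 < jumpF F (qright F u)]) /\
  (* equivalence *)
  ((0 < qjump F alpha /\ qjump F alpha = eta - xi) <->
     [set x | xi < x /\ F x = alpha] !=set0).
Proof.
move=> dF /andP[lam0 _] a01 xi eta A.
have AE : A = [set x | xi < x /\ F x = alpha] := Aplus_level dF a01 lam0.
have JF_quantiles (q : R -> R) : q = qleft F \/ q = qright F ->
    JF F = [set x | exists2 u, 0 < u < 1 &
             qleft F u = x /\ x = qright F u /\ 0 < jumpF F (q u)].
  move=> qE; apply/seteqP; split=> x.
    move=> jump; have [u u01 [qlx qrx]] := jump_quantiles dF jump.
    by exists u => //; case: qE => ->; rewrite ?qlx ?qrx.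
  by move=> [u _ [qlx [qrx]]]; case: qE => ->; rewrite ?qlx -?qrx.
split; [move=> xieta | split; [move=> xieta | split]].
- split; first by apply: (F_eq_on_gap dF a01); rewrite lexx.
  split; first by rewrite (Fm_qright_gap dF a01).
  split; first exact: no_jump_across_gap.
  split; first exact/(level_neq0 dF a01).
  split; first by rewrite AE; exact: continuous_within_level.
  by rewrite AE; split=> //; split; [exact: level_itv_oo | exact: level_itv_oc].
- rewrite AE; apply/seteqP; split=> // x /(level_sub_itv dF a01).
  by rewrite /= in_itv /= -/xi -/eta => /andP[xix xeta]; lra.
- by split; apply: JF_quantiles; [left | right].
- rewrite (qjumpE dF a01) (level_neq0 dF a01) -/xi -/eta.
  by split=> [[] | xieta]; lra.
Qed.
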